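(* Let $p(0,N):=\frac{1}{2+a\varphi_N}$, $k(N):=\lfloor N/\sqrt{\log N}\rfloor$, and for $w\in\mathbb W$ let $S(w):=\max_{0\le n\le\tau_0(w)}w(n)$. Then, in $\mathbb P^{p(0,N)}_{k(N)}$-probability as $N\to\infty$, $$\max_{0\le n<\sigma_{S(W)}(W)}\big(\log_N S(W)-\log_N W(n)\big)\to0$$ and $$\max_{S(W)\ge k>0}\ \max_{\sigma_k(W)\le n<\sigma_{k-1}(W)}\big(\log_N k-\log_N W(n)\big)\to0.$$
   Context: $a>0$ and $0<\varphi_N\le1$. Let $\mathbb W$ be the set of integer sequences $w=(w(0),w(1),\dots)$ with $w(n+1)-w(n)\in\{-1,1\}$. For $p\in(0,1)$ and $k\in\mathbb Z$, $\mathbb P_k^p$ is the law on $\mathbb W$ of the simple random walk $W$ with $W(0)=k$ stepping $+1$ with probability $p$ and $-1$ with probability $1-p$. For $k\in\mathbb N_0$, $\tau_k(w):=\min\{n\in\mathbb N_0: w(n)=k\}$, and $\sigma_k(w):=\max\{n\in\mathbb N_0: w(n)=k,\ w(j)\ge1\text{ for all }j\in\{0,\dots,n-1\}\}$ is the time of the last visit of $k$ before $w$ hits $0$ (so $\sigma_0=\tau_0$). $\log_N x=\log x/\log N$. *)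

From Stdlib Require Import Reals Lra Lia ZArith List Classical ClassicalEpsilon.
From Coquelicot Require Import Coquelicot.
Import ListNotations.
Open Scope R_scope.

(** Step sequences: [true] = step +1, [false] = step -1. *)

Fixpoint allpaths (n : nat) : list (list bool) :=
  match n with
  | O => [nil]
  | S m => map (cons true) (allpaths m) ++ map (cons false) (allpaths m)
  end.

Fixpoint weight (p : R) (l : list bool) : R :=
  match l with
  | nil => 1
  | b :: l' => (if b then p else 1 - p) * weight p l'
  end.

Definition prob_n (p : R) (n : nat) (E : list bool -> Prop) : R :=
  fold_right Rplus 0
    (map (fun l => if excluded_middle_informative (E l) then weight p l else 0)
         (allpaths n)).

Definition step (b : bool) : Z := if b then 1%Z else (-1)%Z.
Definition walk (k : nat) (l : list bool) (m : nat) : Z :=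
  (Z.of_nat k + fold_right Z.add 0 (map step (firstn m l)))%Z.

Definition is_tau0 (w : nat -> Z) (T : nat) : Prop :=
  w T = 0%Z /\ forall j, (j < T)%nat -> w j <> 0%Z.

Definition is_sigma (w : nat -> Z) (j : Z) (s : nat) : Prop :=
  w s = j /\ (forall i, (i < s)%nat -> (1 <= w i)%Z) /\
  forall m, w m = j -> (forall i, (i < m)%nat -> (1 <= w i)%Z) -> (m <= s)%nat.

Definition is_max_upto (w : nat -> Z) (T : nat) (M : Z) : Prop :=
  (exists m, (m <= T)%nat /\ w m = M) /\ forall m, (m <= T)%nat -> (w m <= M)%Z.

Definition logN (N : nat) (x : R) : R := ln x / ln (INR N).

(** The "good" event at tolerance eps for the path w, given that tau_0 = T:
    both maxima of the statement are <= eps. (Both maxima are over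
    nonnegative terms, so this is |max| <= eps; an empty max imposes nothing.) *)
Definition good_event (N : nat) (eps : R) (w : nat -> Z) (T : nat) : Prop :=
  forall Smax : Z, is_max_upto w T Smax ->
    (forall s, is_sigma w Smax s ->
       forall n, (n < s)%nat -> logN N (IZR Smax) - logN N (IZR (w n)) <= eps) /\
    (forall k : Z, (0 < k <= Smax)%Z ->
       forall s1 s2, is_sigma w k s1 -> is_sigma w (k - 1) s2 ->
       forall n, (s1 <= n < s2)%nat -> logN N (IZR k) - logN N (IZR (w n)) <= eps).

(** P^p_k (tau_0 < oo and E), for an event E determined by the path stopped at
    tau_0: the increasing limit over horizons n of the probability that
    tau_0 <= n and E holds. *)
Definition prob_stopped (p : R) (k : nat)
    (E : (nat -> Z) -> nat -> Prop) : R :=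
  real (Lim_seq (fun n => prob_n p n (fun l =>
     exists T, (T <= n)%nat /\ is_tau0 (walk k l) T /\ E (walk k l) T))).

Definition p0N (a : R) (phi : nat -> R) (N : nat) : R := 1 / (2 + a * phi N).
Definition kN (N : nat) : nat :=
  Z.to_nat (Int_part (INR N / sqrt (ln (INR N)))).

From Stdlib Require Import Reals ZArith Lra Lia List Classical ClassicalEpsilon.
From Coquelicot Require Import Coquelicot.
Open Scope R_scope.

(* Since p < 1/2, the walk started at k hits 0 almost surely.  Before tau_0 both maxima
   exceed eps only if the walk climbs above c = N^eps / 2 times one of its earlier values,
   i.e. above c times its running minimum mu.  The potential (z / mu + 1 + ln mu) / c of
   the position z and running minimum mu is a supermartingale that is >= 1 on this event,
   so it has probability at most (2 + ln k) / c <= 24 / (eps^2 ln N), which tends to 0. *)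

Lemma fold_right_Rplus_init (a : R) (L : list R) :
  fold_right Rplus a L = a + fold_right Rplus 0 L.
Proof. induction L as [|x L IH]; simpl; [ring | rewrite IH; ring]. Qed.

Lemma sum_map_app {A} (f : A -> R) (L1 L2 : list A) :
  fold_right Rplus 0 (map f (L1 ++ L2)) =
  fold_right Rplus 0 (map f L1) + fold_right Rplus 0 (map f L2).
Proof. rewrite map_app, fold_right_app, fold_right_Rplus_init; ring. Qed.

Lemma sum_map_scal {A} (c : R) (f : A -> R) (L : list A) :
  fold_right Rplus 0 (map (fun x => c * f x) L) = c * fold_right Rplus 0 (map f L).
Proof. induction L as [|x L IH]; simpl; [ring | rewrite IH; ring]. Qed.

Lemma prob_n_0 (p : R) (E : list bool -> Prop) :
  prob_n p 0 E = if excluded_middle_informative (E nil) then 1 else 0.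
Proof. unfold prob_n; simpl; destruct excluded_middle_informative; ring. Qed.

Lemma prob_n_S (p : R) n (E : list bool -> Prop) :
  prob_n p (S n) E =
  p * prob_n p n (fun l => E (true :: l)) + (1 - p) * prob_n p n (fun l => E (false :: l)).
Proof.
  unfold prob_n; simpl allpaths.
  rewrite sum_map_app, !map_map, <- !sum_map_scal.
  f_equal; f_equal; apply map_ext; intros l; simpl;
    destruct excluded_middle_informative; ring.
Qed.

Lemma prob_n_ext (p : R) n (E E' : list bool -> Prop) :
  (forall l, E l <-> E' l) -> prob_n p n E = prob_n p n E'.
Proof.
  intros HE; unfold prob_n; f_equal; apply map_ext; intros l; specialize (HE l).
  destruct (excluded_middle_informative (E l)), (excluded_middle_informative (E' l));
    [reflexivity | exfalso; tauto | exfalso; tauto | reflexivity].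
Qed.

Lemma prob_n_empty (p : R) n (E : list bool -> Prop) : (forall l, ~ E l) -> prob_n p n E = 0.
Proof.
  revert E; induction n as [|n IH]; intros E HE.
  - rewrite prob_n_0; destruct excluded_middle_informative as [h|]; [destruct (HE _ h)|ring].
  - rewrite prob_n_S, !IH by (intros l; apply HE); ring.
Qed.

Section StepLaw.

Variable p : R.
Hypothesis hp : 0 <= p <= 1.

Lemma prob_n_nonneg n (E : list bool -> Prop) : 0 <= prob_n p n E.
Proof.
  revert E; induction n as [|n IH]; intros E.
  - rewrite prob_n_0; destruct excluded_middle_informative; lra.
  - rewrite prob_n_S.
    apply Rplus_le_le_0_compat; apply Rmult_le_pos; try apply IH; lra.
Qed.

Lemma prob_n_le_1 n (E : list bool -> Prop) : prob_n p n E <= 1.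
Proof.
  revert E; induction n as [|n IH]; intros E.
  - rewrite prob_n_0; destruct excluded_middle_informative; lra.
  - rewrite prob_n_S.
    pose proof (IH (fun l => E (true :: l))); pose proof (IH (fun l => E (false :: l))).
    nra.
Qed.

Lemma prob_n_cover n (E F G : list bool -> Prop) :
  (forall l, length l = n -> E l \/ F l \/ G l) ->
  1 <= prob_n p n E + prob_n p n F + prob_n p n G.
Proof.
  revert E F G; induction n as [|n IH]; intros E F G Hcov.
  - rewrite !prob_n_0.
    destruct (Hcov nil eq_refl) as [h|[h|h]];
      repeat destruct excluded_middle_informative; try tauto; lra.
  - rewrite !prob_n_S.
    pose proof (IH (fun l => E (true :: l)) (fun l => F (true :: l)) (fun l => G (true :: l))
                   (fun l Hl => Hcov (true :: l) (f_equal S Hl))).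
    pose proof (IH (fun l => E (false :: l)) (fun l => F (false :: l)) (fun l => G (false :: l))
                   (fun l Hl => Hcov (false :: l) (f_equal S Hl))).
    nra.
Qed.

End StepLaw.

Open Scope Z_scope.

Definition zwalk (z : Z) (l : list bool) (m : nat) : Z :=
  z + fold_right Z.add 0 (map step (firstn m l)).

Lemma walk_zwalk k l : walk k l = zwalk (Z.of_nat k) l.
Proof. reflexivity. Qed.

Lemma zwalk_0 z l : zwalk z l 0 = z.
Proof. unfold zwalk; simpl; lia. Qed.

Lemma zwalk_S z b l m : zwalk z (b :: l) (S m) = zwalk (z + step b) l m.
Proof. unfold zwalk; simpl; lia. Qed.

Lemma zwalk_unit_steps l z j : -1 <= zwalk z l (S j) - zwalk z l j <= 1.
Proof.
  revert z j; induction l as [|b l IH]; intros z [|j].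
  - unfold zwalk; simpl; lia.
  - unfold zwalk; simpl; lia.
  - rewrite zwalk_S, !zwalk_0; destruct b; simpl; lia.
  - rewrite !zwalk_S; apply IH.
Qed.

Lemma first_hit_zero (w : nat -> Z) :
  (forall j, -1 <= w (S j) - w j <= 1) -> 1 <= w 0%nat ->
  forall n, (exists j, (j <= n)%nat /\ w j < 1) ->
  exists T, (T <= n)%nat /\ w T = 0 /\ forall j, (j < T)%nat -> 1 <= w j.
Proof.
  intros Hstep H0; induction n as [|n IH]; intros [j [Hjn Hj]].
  - replace j with 0%nat in Hj by lia; lia.
  - destruct (classic (exists j, (j <= n)%nat /\ w j < 1)) as [Hearly|Hlate].
    + destruct (IH Hearly) as [T [HT HwT]]; exists T; split; [lia | exact HwT].
    + assert (Habove : forall i, (i <= n)%nat -> 1 <= w i).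
      { intros i Hi; apply Z.nlt_ge; intros Hlt; apply Hlate; eauto. }
      assert (j = S n) as ->.
      { destruct (Nat.eq_dec j (S n)) as [|]; [assumption|].
        exfalso; apply Hlate; exists j; split; [lia | exact Hj]. }
      exists (S n); split; [lia|]; split.
      * specialize (Hstep n); specialize (Habove n (le_n n)); lia.
      * intros i Hi; apply Habove; lia.
Qed.

Fixpoint survives (z : Z) (l : list bool) : Prop :=
  1 <= z /\ match l with nil => True | b :: l' => survives (z + step b) l' end.

Lemma not_survives_hits l z :
  ~ survives z l -> exists j, (j <= length l)%nat /\ zwalk z l j < 1.
Proof.
  revert z; induction l as [|b l IH]; intros z Hns; simpl in Hns.
  - exists 0%nat; rewrite zwalk_0; split; [lia|]; apply Z.nle_gt; tauto.
  - destruct (Z_lt_le_dec z 1) as [Hz|Hz].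
    + exists 0%nat; rewrite zwalk_0; split; [lia | exact Hz].
    + destruct (IH (z + step b)) as [j [Hj Hw]]; [tauto|].
      exists (S j); rewrite zwalk_S; simpl; split; [lia | exact Hw].
Qed.

Close Scope Z_scope.

Section Survival.

Variable p : R.
Hypothesis hp : 0 <= p <= 1.

Lemma prob_survives_S n z : (1 <= z)%Z ->
  prob_n p (S n) (survives z) =
  p * prob_n p n (survives (z + 1)) + (1 - p) * prob_n p n (survives (z - 1)).
Proof.
  intros Hz; rewrite prob_n_S.
  rewrite (prob_n_ext p n (fun l => survives z (true :: l)) (survives (z + 1))),
    (prob_n_ext p n (fun l => survives z (false :: l)) (survives (z - 1)));
    [reflexivity | |]; intros l; simpl;
    [replace (z + -1)%Z with (z - 1)%Z by lia|]; tauto.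
Qed.

(** [s ^ z] is a supermartingale for the walk killed at 0, contracting by [rho] per step. *)
Lemma prob_survives_le (s rho : R) :
  1 <= s -> 0 <= rho -> p * s * s + (1 - p) <= rho * s ->
  forall n z, prob_n p n (survives z) <= rho ^ n * s ^ Z.to_nat z.
Proof.
  intros Hs Hrho Hcontr n; induction n as [|n IH]; intros z.
  - rewrite prob_n_0; simpl.
    pose proof (pow_R1_Rle s (Z.to_nat z) Hs); destruct excluded_middle_informative; lra.
  - destruct (Z_lt_le_dec z 1) as [Hz|Hz].
    + rewrite prob_n_empty by (intros [|b l] [H _]; lia).
      apply Rmult_le_pos; apply pow_le; lra.
    + rewrite prob_survives_S by exact Hz.
      pose proof (IH (z + 1)%Z) as Hup; pose proof (IH (z - 1)%Z) as Hdown.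
      set (t := Z.to_nat (z - 1)) in Hdown.
      replace (Z.to_nat (z + 1)) with (S (S t)) in Hup by (unfold t; lia).
      replace (Z.to_nat z) with (S t) by (unfold t; lia).
      assert (Hst : 0 <= rho ^ n * s ^ t) by (apply Rmult_le_pos; apply pow_le; lra).
      apply Rle_trans with (rho ^ n * s ^ t * (p * s * s + (1 - p))); simpl in *; nra.
Qed.

End Survival.

Lemma prob_survives_vanishes p z : 0 < p < 1 / 2 ->
  is_lim_seq (fun n => prob_n p n (survives z)) 0.
Proof.
  intros hp.
  set (s := 1 / (2 * p)); set (rho := 1 / 2 + 2 * p * (1 - p)).
  assert (Hs : 1 <= s)
    by (unfold s; apply Rmult_le_reg_r with (2 * p); [lra|]; field_simplify; lra).
  assert (Hrho : 0 <= rho < 1) by (unfold rho; nra).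
  assert (Hcontr : p * s * s + (1 - p) <= rho * s) by (unfold s, rho; right; field; lra).
  apply is_lim_seq_le_le with (fun _ => 0) (fun n => rho ^ n * s ^ Z.to_nat z).
  - intros n; split; [apply prob_n_nonneg | apply prob_survives_le]; lra.
  - apply is_lim_seq_const.
  - replace (Finite 0) with (Rbar_mult 0 (s ^ Z.to_nat z)) by (simpl; f_equal; ring).
    apply is_lim_seq_scal_r, is_lim_seq_geom; rewrite Rabs_pos_eq; lra.
Qed.

Fixpoint overshoots (c : R) (z mu : Z) (l : list bool) : Prop :=
  (1 <= z)%Z /\
  (c * IZR mu < IZR z \/
   match l with
   | nil => False
   | b :: l' => overshoots c (z + step b) (Z.min mu (z + step b)) l'
   end).

Lemma overshoots_of_ratio (c : R) (l : list bool) (z mu : Z) (i m : nat) :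
  0 < c -> (mu <= z)%Z -> (i <= m <= length l)%nat ->
  (forall j, (j <= m)%nat -> (1 <= zwalk z l j)%Z) ->
  c * IZR mu < IZR (zwalk z l m) \/ c * IZR (zwalk z l i) < IZR (zwalk z l m) ->
  overshoots c z mu l.
Proof.
  intros Hc; revert z mu i m; induction l as [|b l IH]; intros z mu i m Hmu Him Hpos Hratio;
    simpl in Him |- *.
  all: split; [specialize (Hpos 0%nat (Nat.le_0_l _)); rewrite zwalk_0 in Hpos; exact Hpos|].
  all: assert (Hmuz : c * IZR mu <= c * IZR z)
         by (apply Rmult_le_compat_l; [lra | apply IZR_le; exact Hmu]).
  - replace m with 0%nat in Hratio by lia; replace i with 0%nat in Hratio by lia.
    rewrite zwalk_0 in Hratio; lra.
  - destruct m as [|m].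
    + replace i with 0%nat in Hratio by lia; rewrite zwalk_0 in Hratio; left; lra.
    + right; set (z' := (z + step b)%Z).
      assert (Hmin : c * IZR (Z.min mu z') <= c * IZR mu)
        by (apply Rmult_le_compat_l; [lra | apply IZR_le; lia]).
      assert (Hpos' : forall j, (j <= m)%nat -> (1 <= zwalk z' l j)%Z)
        by (intros j Hj; unfold z'; rewrite <- zwalk_S; apply Hpos; lia).
      rewrite zwalk_S in Hratio; fold z' in Hratio.
      destruct i as [|i].
      * apply (IH z' _ 0%nat m); [lia | lia | exact Hpos'|].
        left; rewrite zwalk_0 in Hratio; lra.
      * rewrite zwalk_S in Hratio; fold z' in Hratio.
        apply (IH z' _ i m); [lia | lia | exact Hpos'|]; lra.
Qed.

Section Overshoot.

Variables p c : R.
Hypotheses (hp : 0 < p <= 1 / 2) (hc : 0 < c).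

Lemma prob_overshoots_S n z mu :
  (1 <= z)%Z -> ~ c * IZR mu < IZR z ->
  prob_n p (S n) (overshoots c z mu) =
  p * prob_n p n (overshoots c (z + 1) (Z.min mu (z + 1))) +
  (1 - p) * prob_n p n (overshoots c (z - 1) (Z.min mu (z - 1))).
Proof.
  intros Hz Hnot; rewrite prob_n_S.
  rewrite (prob_n_ext p n (fun l => overshoots c z mu (true :: l))
             (overshoots c (z + 1) (Z.min mu (z + 1)))),
    (prob_n_ext p n (fun l => overshoots c z mu (false :: l))
       (overshoots c (z - 1) (Z.min mu (z - 1))));
    [reflexivity | |]; intros l; simpl;
    [replace (z + -1)%Z with (z - 1)%Z by lia|]; tauto.
Qed.

(** The term [ln mu] pays for the drops of the running minimum (see [ln_pred_gap]). *)
Definition overshoot_potential (z mu : Z) : R := (IZR z / IZR mu + 1 + ln (IZR mu)) / c.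

Lemma overshoot_potential_nonneg z mu : (1 <= mu <= z)%Z -> 0 <= overshoot_potential z mu.
Proof.
  intros Hm; unfold overshoot_potential.
  assert (1 <= IZR mu) by (apply IZR_le; lia).
  assert (0 <= IZR z) by (apply IZR_le; lia).
  assert (0 <= ln (IZR mu)) by (rewrite <- ln_1; apply ln_le; lra).
  assert (0 <= IZR z / IZR mu) by (apply Rdiv_le_0_compat; lra).
  apply Rdiv_le_0_compat; lra.
Qed.

Lemma overshoot_potential_ge_1 z mu :
  (1 <= mu <= z)%Z -> c * IZR mu < IZR z -> 1 <= overshoot_potential z mu.
Proof.
  intros Hm Hz; unfold overshoot_potential.
  assert (1 <= IZR mu) by (apply IZR_le; lia).
  assert (0 <= ln (IZR mu)) by (rewrite <- ln_1; apply ln_le; lra).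
  apply Rmult_le_reg_r with c; [exact hc|].
  replace ((IZR z / IZR mu + 1 + ln (IZR mu)) / c * c)
    with (IZR z / IZR mu + 1 + ln (IZR mu)) by (field; lra).
  assert (c < IZR z / IZR mu)
    by (apply Rmult_lt_reg_r with (IZR mu); [lra|]; field_simplify; lra).
  lra.
Qed.

Lemma overshoot_potential_step_above_min z mu : (1 <= mu)%Z ->
  p * overshoot_potential (z + 1) mu + (1 - p) * overshoot_potential (z - 1) mu
  <= overshoot_potential z mu.
Proof.
  intros Hmu; unfold overshoot_potential; rewrite plus_IZR, minus_IZR.
  assert (1 <= IZR mu) by (apply IZR_le; lia).
  assert (0 < / (IZR mu * c)) by (apply Rinv_0_lt_compat; nra).
  assert (Hdrift : p * (((IZR z + 1) / IZR mu + 1 + ln (IZR mu)) / c)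
                   + (1 - p) * (((IZR z - 1) / IZR mu + 1 + ln (IZR mu)) / c)
                   = (IZR z / IZR mu + 1 + ln (IZR mu)) / c + (2 * p - 1) * / (IZR mu * c))
    by (field; lra).
  rewrite Hdrift; nra.
Qed.

Lemma ln_pred_gap x : 2 <= x -> 1 / x <= ln x - ln (x - 1).
Proof.
  intros Hx; pose proof (exp_ineq1_le (- (1 / x))) as Hexp.
  assert (Hx1 : 1 / x <= 1 / 2)
    by (apply Rmult_le_compat_l; [lra | apply Rinv_le_contravar; lra]).
  apply ln_le in Hexp; [|lra]; rewrite ln_exp in Hexp.
  replace (1 + - (1 / x)) with ((x - 1) * / x) in Hexp by (field; lra).
  rewrite ln_mult, ln_Rinv in Hexp by (try apply Rinv_0_lt_compat; lra).
  lra.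
Qed.

Lemma overshoot_potential_step_at_min z : (2 <= z)%Z ->
  p * overshoot_potential (z + 1) z + (1 - p) * overshoot_potential (z - 1) (z - 1)
  <= overshoot_potential z z.
Proof.
  intros Hz; unfold overshoot_potential; rewrite plus_IZR, minus_IZR.
  assert (Hx : 2 <= IZR z) by (apply IZR_le; lia).
  pose proof (ln_pred_gap _ Hx) as Hgap.
  assert (0 < / c) by (apply Rinv_0_lt_compat; lra).
  assert (0 < 1 / IZR z) by (apply Rdiv_lt_0_compat; lra).
  replace (p * (((IZR z + 1) / IZR z + 1 + ln (IZR z)) / c)
           + (1 - p) * (((IZR z - 1) / (IZR z - 1) + 1 + ln (IZR z - 1)) / c))
    with ((2 + ln (IZR z) - ((1 - p) * (ln (IZR z) - ln (IZR z - 1)) - p * (1 / IZR z))) * / c)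
    by (field; lra).
  replace ((IZR z / IZR z + 1 + ln (IZR z)) / c) with ((2 + ln (IZR z)) * / c) by (field; lra).
  assert (p * (1 / IZR z) <= (1 - p) * (ln (IZR z) - ln (IZR z - 1))) by nra.
  nra.
Qed.

Lemma prob_overshoots_le n z mu :
  (1 <= mu <= z)%Z -> prob_n p n (overshoots c z mu) <= overshoot_potential z mu.
Proof.
  assert (hp' : 0 <= p <= 1) by lra.
  revert z mu; induction n as [|n IH]; intros z mu Hm.
  - rewrite prob_n_0; destruct excluded_middle_informative as [[_ [Hz|[]]]|].
    + apply overshoot_potential_ge_1; assumption.
    + apply overshoot_potential_nonneg; assumption.
  - destruct (Rlt_dec (c * IZR mu) (IZR z)) as [Hz|Hz].
    + pose proof (prob_n_le_1 p hp' (S n) (overshoots c z mu)).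
      pose proof (overshoot_potential_ge_1 z mu Hm Hz); lra.
    + rewrite prob_overshoots_S by (lia || exact Hz).
      replace (Z.min mu (z + 1)) with mu by lia.
      pose proof (IH (z + 1)%Z mu ltac:(lia)) as Hup.
      destruct (Z.eq_dec mu z) as [<-|Hne].
      * destruct (Z.eq_dec mu 1) as [->|Hmu1].
        -- rewrite (prob_n_empty p n (overshoots c (1 - 1) _)) by (intros [|b l] [H _]; lia).
           unfold overshoot_potential in *; rewrite ln_1 in *; simpl IZR in *.
           assert (0 < / c) by (apply Rinv_0_lt_compat; lra).
           replace ((2 / 1 + 1 + 0) / c) with (3 * / c) in Hup by (field; lra).
           replace ((1 / 1 + 1 + 0) / c) with (2 * / c) by (field; lra).
           nra.
        -- replace (Z.min mu (mu - 1)) with (mu - 1)%Z by lia.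
           pose proof (IH (mu - 1)%Z (mu - 1)%Z ltac:(lia)) as Hdown.
           pose proof (overshoot_potential_step_at_min mu ltac:(lia)).
           nra.
      * replace (Z.min mu (z - 1)) with mu by lia.
        pose proof (IH (z - 1)%Z mu ltac:(lia)) as Hdown.
        pose proof (overshoot_potential_step_above_min z mu ltac:(lia)).
        nra.
Qed.

End Overshoot.

Lemma logN_sub_le N eps x y :
  0 < ln (INR N) -> 0 < x -> 0 < y -> x <= exp (eps * ln (INR N)) * y ->
  logN N x - logN N y <= eps.
Proof.
  intros HL Hx Hy Hxy; unfold logN.
  apply ln_le in Hxy; [|exact Hx].
  rewrite ln_mult, ln_exp in Hxy by (try apply exp_pos; lra).
  apply Rmult_le_reg_r with (ln (INR N)); [exact HL|].
  replace ((ln x / ln (INR N) - ln y / ln (INR N)) * ln (INR N)) with (ln x - ln y)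
    by (field; lra).
  lra.
Qed.

Lemma positive_prefix_lt_tau0 (w : nat -> Z) T s :
  is_tau0 w T -> (forall i, (i < s)%nat -> (1 <= w i)%Z) -> w s <> 0%Z -> (s < T)%nat.
Proof.
  intros [HwT _] Hpos Hws; destruct (lt_eq_lt_dec s T) as [[Hlt | ->] | HTs]; [exact Hlt | lia |].
  specialize (Hpos T HTs); lia.
Qed.

(** The last visits [sigma_S] and [sigma_(k-1)] come after [n] and (for [k >= 2]) before
    [tau_0], and [k <= 2 (k - 1)]. *)
Lemma good_event_of_ratio_bound N eps (w : nat -> Z) T :
  0 < ln (INR N) -> 0 <= eps -> is_tau0 w T ->
  (forall i m, (i <= m)%nat -> (m < T)%nat ->
     IZR (w m) <= exp (eps * ln (INR N)) / 2 * IZR (w i)) ->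
  good_event N eps w T.
Proof.
  intros HL Heps Htau Hratio Smax [_ Hmax].
  set (E := exp (eps * ln (INR N))) in Hratio.
  assert (HE : 1 <= E).
  { pose proof (exp_ineq1_le (eps * ln (INR N))).
    pose proof (Rmult_le_pos eps _ Heps (Rlt_le _ _ HL)); unfold E; lra. }
  split.
  - intros s [HwS [Hpos _]] n Hn.
    assert (Hwn : (1 <= w n)%Z) by (apply Hpos; exact Hn).
    assert (HnS : (w n <= Smax)%Z).
    { apply Hmax, Nat.lt_le_incl, (positive_prefix_lt_tau0 w T n Htau); [|lia].
      intros i Hi; apply Hpos; lia. }
    assert (HsT : (s < T)%nat) by (apply (positive_prefix_lt_tau0 w T s Htau Hpos); lia).
    pose proof (Hratio n s (Nat.lt_le_incl _ _ Hn) HsT) as Hb; rewrite HwS in Hb.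
    assert (1 <= IZR (w n)) by (apply IZR_le; exact Hwn).
    assert (1 <= IZR Smax) by (apply IZR_le; lia).
    apply logN_sub_le; [exact HL | lra | lra |]; fold E; nra.
  - intros k Hk s1 s2 _ [Hws2 [Hpos _]] n Hn.
    assert (Hwn : 1 <= IZR (w n)) by (apply IZR_le, Hpos; lia).
    apply logN_sub_le; [exact HL | apply IZR_lt; lia | lra |].
    destruct (Z.eq_dec k 1) as [->|Hk1]; [change (IZR 1) with 1; fold E; nra|].
    assert (HsT : (s2 < T)%nat) by (apply (positive_prefix_lt_tau0 w T s2 Htau Hpos); lia).
    pose proof (Hratio n s2 ltac:(lia) HsT) as Hb; rewrite Hws2, minus_IZR in Hb.
    assert (2 <= IZR k) by (apply IZR_le; lia).
    fold E; nra.
Qed.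

Lemma walk_outcomes N eps (k n : nat) (l : list bool) :
  (1 <= k)%nat -> 0 < ln (INR N) -> 0 <= eps -> length l = n ->
  (exists T, (T <= n)%nat /\ is_tau0 (walk k l) T /\ good_event N eps (walk k l) T)
  \/ survives (Z.of_nat k) l
  \/ overshoots (exp (eps * ln (INR N)) / 2) (Z.of_nat k) (Z.of_nat k) l.
Proof.
  intros Hk HL Heps Hlen; rewrite walk_zwalk.
  set (c := exp (eps * ln (INR N)) / 2).
  assert (Hc : 0 < c) by (pose proof (exp_pos (eps * ln (INR N))); unfold c; lra).
  destruct (classic (survives (Z.of_nat k) l)) as [Hs|Hs]; [tauto|].
  destruct (classic (overshoots c (Z.of_nat k) (Z.of_nat k) l)) as [Ho|Ho]; [tauto|].
  left.
  apply not_survives_hits in Hs; rewrite Hlen in Hs.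
  destruct (first_hit_zero (zwalk (Z.of_nat k) l) (zwalk_unit_steps l _)
              ltac:(rewrite zwalk_0; lia) n Hs) as [T [HTn [HwT Hpos]]].
  assert (Htau : is_tau0 (zwalk (Z.of_nat k) l) T)
    by (split; [exact HwT | intros j Hj; specialize (Hpos j Hj); lia]).
  exists T; split; [exact HTn|]; split; [exact Htau|].
  apply good_event_of_ratio_bound; [exact HL | exact Heps | exact Htau |].
  intros i m Him HmT; apply Rnot_lt_le; intros Hgt; apply Ho.
  apply (overshoots_of_ratio c l _ _ i m Hc); [lia | lia | |right; exact Hgt].
  intros j Hj; apply Hpos; lia.
Qed.

Lemma real_Lim_seq_between (f g : nat -> R) (L M : R) :
  (forall n, g n <= f n <= M) -> is_lim_seq g L -> L <= real (Lim_seq f) <= M.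
Proof.
  intros Hfg Hg.
  assert (Hlow : Rbar_le (Lim_seq g) (Lim_seq f))
    by (apply Lim_seq_le_loc; exists 0%nat; intros n _; apply Hfg).
  assert (Hup : Rbar_le (Lim_seq f) (Lim_seq (fun _ => M)))
    by (apply Lim_seq_le_loc; exists 0%nat; intros n _; apply Hfg).
  rewrite (is_lim_seq_unique _ _ Hg) in Hlow; rewrite Lim_seq_const in Hup.
  destruct (Lim_seq f); simpl in *; tauto || lra.
Qed.

Lemma prob_stopped_good_event_ge p (k N : nat) eps :
  0 < p < 1 / 2 -> (1 <= k)%nat -> 0 < ln (INR N) -> 0 <= eps ->
  let c := exp (eps * ln (INR N)) / 2 in
  1 - overshoot_potential c (Z.of_nat k) (Z.of_nat k)
  <= prob_stopped p k (good_event N eps) <= 1.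
Proof.
  intros Hp Hk HL Heps c.
  assert (Hc : 0 < c) by (pose proof (exp_pos (eps * ln (INR N))); unfold c; lra).
  set (B := overshoot_potential c (Z.of_nat k) (Z.of_nat k)).
  apply (real_Lim_seq_between _ (fun n => 1 - prob_n p n (survives (Z.of_nat k)) - B)).
  - intros n; split; [| apply prob_n_le_1; lra].
    pose proof (prob_n_cover p ltac:(lra) n _ _ _ (fun l => walk_outcomes N eps k n l Hk HL Heps))
      as Hcover.
    pose proof (prob_overshoots_le p c ltac:(lra) Hc n (Z.of_nat k) (Z.of_nat k) ltac:(lia))
      as Hover.
    fold c in Hcover; fold B in Hover; lra.
  - replace (1 - B) with (1 - 0 - B) by ring.
    apply is_lim_seq_minus'; [| apply is_lim_seq_const].
    apply is_lim_seq_minus'; [apply is_lim_seq_const | apply prob_survives_vanishes; exact Hp].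
Qed.

Lemma p0N_bounds a (phi : nat -> R) N :
  0 < a -> 0 < phi N <= 1 -> 0 < p0N a phi N < 1 / 2.
Proof.
  intros Ha Hphi; unfold p0N.
  assert (0 < a * phi N) by nra.
  split; [apply Rdiv_lt_0_compat; lra|].
  apply Rmult_lt_reg_r with (2 + a * phi N); [lra|]; field_simplify; lra.
Qed.

Lemma kN_bounds N : (3 <= N)%nat ->
  1 <= ln (INR N) /\ (1 <= kN N)%nat /\ INR (kN N) <= INR N.
Proof.
  intros HN; assert (HN3 : 3 <= INR N) by (apply (le_INR 3) in HN; simpl in HN; lra).
  assert (HL : 1 <= ln (INR N)).
  { rewrite <- (ln_exp 1); apply ln_le; [apply exp_pos|]; pose proof exp_le_3; lra. }
  set (L := ln (INR N)) in *.
  assert (HLN : L < INR N)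
    by (pose proof (exp_ineq1_le L); unfold L in *; rewrite exp_ln in * by lra; lra).
  assert (Hs1 : 1 <= sqrt L) by (rewrite <- sqrt_1; apply sqrt_le_1_alt; lra).
  assert (HsL : sqrt L <= L) by (pose proof (sqrt_sqrt L ltac:(lra)); nra).
  set (x := INR N / sqrt L).
  assert (Hx1 : 1 < x)
    by (unfold x; apply Rmult_lt_reg_r with (sqrt L); [lra|]; field_simplify; lra).
  assert (HxN : x <= INR N)
    by (unfold x; apply Rmult_le_reg_r with (sqrt L); [lra|]; field_simplify; nra).
  destruct (base_Int_part x) as [Hfloor_le Hfloor_gt].
  assert (Hpos : (0 < Int_part x)%Z) by (apply lt_IZR; lra).
  unfold kN; fold L x.
  split; [exact HL|]; split; [lia|].
  rewrite INR_IZR_INZ, Z2Nat.id by lia; lra.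
Qed.

Lemma exp_ge_sqr_div_4 x : 0 <= x -> x * x / 4 <= exp x.
Proof.
  intros Hx; replace x with (x / 2 + x / 2) at 3 by field.
  rewrite exp_plus; pose proof (exp_ineq1_le (x / 2)); nra.
Qed.

Lemma overshoot_potential_diag_le N eps (k : nat) :
  0 < eps -> 1 <= ln (INR N) -> (1 <= k)%nat -> INR k <= INR N ->
  overshoot_potential (exp (eps * ln (INR N)) / 2) (Z.of_nat k) (Z.of_nat k)
  <= 24 / (eps * eps) / ln (INR N).
Proof.
  intros Heps HL Hk HkN; unfold overshoot_potential; rewrite <- INR_IZR_INZ.
  set (L := ln (INR N)) in *.
  assert (Hk1 : 1 <= INR k) by (apply (le_INR 1) in Hk; exact Hk).
  assert (Hlnk : 0 <= ln (INR k) <= L)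
    by (split; [rewrite <- ln_1; apply ln_le | apply ln_le]; lra).
  assert (HeL : 0 < eps * L) by nra.
  pose proof (exp_ge_sqr_div_4 (eps * L) ltac:(lra)) as Hexp.
  pose proof (exp_pos (eps * L)) as HE.
  set (E := exp (eps * L)) in *.
  replace ((INR k / INR k + 1 + ln (INR k)) / (E / 2)) with (2 * (2 + ln (INR k)) / E)
    by (field; lra).
  apply Rle_trans with (2 * (2 + ln (INR k)) / (eps * L * (eps * L) / 4)).
  - apply Rmult_le_compat_l; [lra|]; apply Rinv_le_contravar; nra.
  - apply Rmult_le_reg_r with (eps * L * (eps * L) / 4); [nra|].
    replace (2 * (2 + ln (INR k)) / (eps * L * (eps * L) / 4) * (eps * L * (eps * L) / 4))
      with (2 * (2 + ln (INR k))) by (field; nra).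
    replace (24 / (eps * eps) / L * (eps * L * (eps * L) / 4)) with (6 * L) by (field; nra).
    lra.
Qed.

Lemma is_lim_seq_ln_INR : is_lim_seq (fun N => ln (INR N)) p_infty.
Proof.
  apply (is_lim_comp_seq ln INR p_infty p_infty is_lim_ln_p); [|exact is_lim_seq_INR].
  exists 0%nat; intros n _; discriminate.
Qed.

Lemma is_lim_seq_1_sub_div_ln_INR (C : R) :
  is_lim_seq (fun N => 1 - C / ln (INR N)) 1.
Proof.
  assert (Hinv : is_lim_seq (fun N => / ln (INR N)) 0)
    by (apply (is_lim_seq_inv _ p_infty); [exact is_lim_seq_ln_INR | discriminate]).
  apply (is_lim_seq_scal_l _ C) in Hinv; simpl in Hinv; rewrite Rmult_0_r in Hinv.
  pose proof (is_lim_seq_minus' _ _ 1 0 (is_lim_seq_const 1) Hinv) as Hlim.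
  rewrite Rminus_0_r in Hlim; exact Hlim.
Qed.

Theorem lemma4p6 (a : R) (phi : nat -> R)
  (ha : 0 < a) (hphi : forall N : nat, 0 < phi N <= 1) :
  forall eps : R, 0 < eps ->
    is_lim_seq
      (fun N : nat => prob_stopped (p0N a phi N) (kN N) (good_event N eps))
      1.
Proof.
  intros eps Heps.
  apply (is_lim_seq_le_le_loc (fun N => 1 - 24 / (eps * eps) / ln (INR N)) _ (fun _ => 1));
    [| apply is_lim_seq_1_sub_div_ln_INR | apply is_lim_seq_const].
  exists 3%nat; intros N HN.
  destruct (kN_bounds N HN) as [HL [Hk HkN]].
  pose proof (prob_stopped_good_event_ge _ (kN N) N eps (p0N_bounds a phi N ha (hphi N))
                Hk ltac:(lra) ltac:(lra)) as Hprob.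
  pose proof (overshoot_potential_diag_le N eps (kN N) Heps HL Hk HkN).
  simpl in Hprob; lra.
Qed.
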